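(* Let $\lambda\in\mathbb{C}$ with $|\lambda|\neq 0,1$, let $l\ge 0$, and let $\Lambda$ be the $(l+1)\times(l+1)$ matrix with all diagonal entries equal to $\lambda$, all entries directly below the diagonal equal to $1$, and all other entries $0$. Let $S$ be a set with a bijection $R\colon S\to S$, and let $h\colon S\to\mathbb{C}^{l+1}$ be a function such that $\|h\circ R-\Lambda^{-1}h\|$ is bounded on $S$. Then there is a unique function $\widehat{h}\colon S\to\mathbb{C}^{l+1}$ satisfying $\widehat h\circ R=\Lambda^{-1}\widehat h$ and such that $\|\widehat h-h\|$ is bounded on $S$.
   Context: $\|\cdot\|$ denotes the sup norm on $\mathbb{C}^{l+1}$: $\|(a_0,\dots,a_l)\|=\max_i|a_i|$. *)

From HB Require Import structures.
From mathcomp Require Import all_boot all_order all_algebra.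
From mathcomp Require Import complex.
From mathcomp Require Import reals.
Set Implicit Arguments. Unset Strict Implicit. Unset Printing Implicit Defensive.
Import Order.TTheory GRing.Theory Num.Theory.
Local Open Scope ring_scope.

Definition supnorm (R : realType) (n : nat) (v : 'cV[R[i]]_n) : R :=
  \big[Num.max/0]_(k < n) Normc.normc (v k 0).

Definition Lambda (R : realType) (l : nat) (lam : R[i]) : 'M[R[i]]_(l.+1) :=
  \matrix_(a, b) (if a == b then lam
                  else if val a == (val b).+1 then 1 else 0).

Definition bounded_on (R : realType) (S : Type) (n : nat)
  (f : S -> 'cV[R[i]]_n) : Prop :=
  exists M : R, forall s, supnorm (f s) <= M.

(* Write the unknown as hh = h + u.  Since hh \o R = Lambda^-1 hh means
   Lambda hh(R s) = hh(s), u must solve Lambda u(R s) - u(s) = e(s) with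
   e := h - Lambda (h \o R), which is bounded.  Lambda is lambda plus the
   lower shift, so the system is triangular: coordinate a reads
   lambda u_a(R s) - u_a(s) = e_a(s) - u_(a-1)(R s).  A scalar equation
   lambda v(R s) - v(s) = f(s) with f bounded and |lambda| <> 1 has the bounded
   solution v = - sum_k lambda^k f \o R^k if |lambda| < 1, and
   v = sum_k lambda^-(k+1) f \o R^-(k+1) if |lambda| > 1.  Iterating the
   homogeneous equation forwards (|lambda| < 1) or backwards (|lambda| > 1)
   bounds any bounded solution by min(|lambda|, 1/|lambda|)^n sup |v| for
   every n, so it vanishes.  Solving the coordinates in order gives existence,
   and uniqueness follows coordinate by coordinate.  The hypothesis
   lambda <> 0 is only needed for Lambda to be invertible. *)

From HB Require Import structures.
From mathcomp Require Import all_boot all_order all_algebra.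
From mathcomp Require Import complex reals.
From mathcomp Require Import boolp classical_sets functions.
From mathcomp Require Import topology normedtype sequences.

Set Implicit Arguments.
Unset Strict Implicit.
Unset Printing Implicit Defensive.
Import Order.TTheory GRing.Theory Num.Theory.
Import numFieldNormedType.Exports.
Local Open Scope ring_scope.
Local Open Scope classical_set_scope.

Local Notation normc := Normc.normc.

Section RealSeries.
Variable R : realType.
Implicit Types (u : R ^nat) (M r x : R).

Lemma cvg_series_geometric_dom u M r : 0 <= r < 1 ->
  (forall k, `|u k| <= M * r ^+ k) ->
  cvgn (series u) /\ `|limn (series u)| <= M / (1 - r).
Proof.
move=> /andP[r0 r1] hu; have r1' : `|r| < 1 by rewrite ger0_norm.
have M0 : 0 <= M.
  by have := le_trans (normr_ge0 _) (hu 0%N); rewrite expr0 mulr1.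
have cvg_geo : cvgn (series (geometric M r)) by exact: is_cvg_geometric_series.
have cvg_normed : cvgn [normed series u].
  by apply: (series_le_cvg _ _ hu cvg_geo) => n; rewrite ?geometric_ge0.
split; first exact: normed_cvg.
apply: le_trans (lim_series_norm cvg_normed) _.
apply: le_trans (lim_series_le cvg_normed cvg_geo hu) _.
by rewrite (cvg_lim _ (cvg_geometric_series (a := M) r1')).
Qed.

Lemma lim_seriesS u : cvgn (series u) ->
  limn (series u) = u 0%N + limn (series (fun k => u k.+1)).
Proof.
move=> cu.
have shiftE : series (fun k => u k.+1) = (fun n => series u n.+1 - u 0%N).
  by apply/funext => n; rewrite /series /= big_nat_recl //= addrC addKr.
have : series (fun k => u k.+1) @ \oo --> limn (series u) - u 0%N.
  rewrite shiftE; apply: cvgB; last exact: cvg_cst.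
  by rewrite (cvg_shiftS (series u)).
by move/cvg_lim => ->; [rewrite addrC subrK | exact: Rhausdorff].
Qed.

Lemma le0_geometric_dom x M r : 0 <= r < 1 ->
  (forall n, x <= M * r ^+ n) -> x <= 0.
Proof.
move=> /andP[r0 r1] hx; have r1' : `|r| < 1 by rewrite ger0_norm.
rewrite -(cvg_lim (@Rhausdorff R) (cvg_geometric M r1')).
by apply: limr_ge; [exact: cvgP (cvg_geometric M r1') | exact: nearW].
Qed.

End RealSeries.

Section ComplexNorm.
Variable R : realType.
Implicit Types (q z : R[i]).

Lemma normc_ge0 z : 0 <= normc z.
Proof. by case: z => a b; exact: sqrtr_ge0. Qed.

Lemma normcX z n : normc (z ^+ n) = normc z ^+ n.
Proof.
elim: n => [|n IH]; first by rewrite !expr0 Normc.normc1.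
by rewrite !exprS Normc.normcM IH.
Qed.

Lemma normc_Re_le z : `|complex.Re z| <= normc z.
Proof.
case: z => a b /=; rewrite -sqrtr_sqr ler_sqrt ?addr_ge0 ?sqr_ge0 //.
by rewrite lerDl sqr_ge0.
Qed.

Lemma normc_Im_le z : `|complex.Im z| <= normc z.
Proof.
case: z => a b /=; rewrite -sqrtr_sqr ler_sqrt ?addr_ge0 ?sqr_ge0 //.
by rewrite lerDr sqr_ge0.
Qed.

Lemma normc_le_Re_Im z : normc z <= `|complex.Re z| + `|complex.Im z|.
Proof.
case: z => a b /=; rewrite -[X in _ <= X]ger0_norm ?addr_ge0 //.
rewrite -sqrtr_sqr ler_sqrt ?addr_ge0 ?sqr_ge0 //.
rewrite sqrrD !real_normK ?num_real //.
by rewrite lerD2r lerDl mulrn_wge0 // mulr_ge0.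
Qed.

Lemma ReM q z : complex.Re (q * z) =
  complex.Re q * complex.Re z - complex.Im q * complex.Im z.
Proof. by case: q => ? ?; case: z. Qed.

Lemma ImM q z : complex.Im (q * z) =
  complex.Re q * complex.Im z + complex.Im q * complex.Re z.
Proof. by case: q => ? ?; case: z => ? ? /=; rewrite addrC. Qed.

Lemma inv_normc_lt1 z : 1 < normc z -> normc z^-1 < 1.
Proof.
by move=> z_gt1; rewrite Normc.normcV invf_lt1 // (lt_trans ltr01 z_gt1).
Qed.

Lemma normc_gt1_neq0 z : 1 < normc z -> z != 0.
Proof. by apply: contraTneq => ->; rewrite Normc.normc0 ltr10. Qed.

End ComplexNorm.

Section PowerSum.
Variables (R : realType) (q : R[i]) (M : R).
Hypothesis q_lt1 : normc q < 1.
Implicit Types (c : nat -> R[i]).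

(* mathcomp-analysis gives R[i] no complete normed structure, so the series
   sum_k q^k c_k is summed separately on its real and imaginary parts. *)
Definition power_sum c : R[i] :=
  (limn (series (fun k => complex.Re (q ^+ k * c k))) +i*
   limn (series (fun k => complex.Im (q ^+ k * c k))))%C.

Lemma cvg_power_series_part (p : R[i] -> R) c :
  (forall z, `|p z| <= normc z) -> (forall k, normc (c k) <= M) ->
  cvgn (series (fun k => p (q ^+ k * c k))) /\
  `|limn (series (fun k => p (q ^+ k * c k)))| <= M / (1 - normc q).
Proof.
move=> p_le c_le; apply: cvg_series_geometric_dom => [|k].
  by rewrite normc_ge0 q_lt1.
rewrite (le_trans (p_le _)) // Normc.normcM normcX mulrC ler_wpM2r //.
by rewrite exprn_ge0 // normc_ge0.
Qed.

Lemma normc_power_sum_le c : (forall k, normc (c k) <= M) ->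
  normc (power_sum c) <= (M / (1 - normc q)) *+ 2.
Proof.
move=> c_le; rewrite mulr2n; apply: le_trans (normc_le_Re_Im _) _.
by apply: lerD; [case: (cvg_power_series_part (@normc_Re_le _) c_le) |
                  case: (cvg_power_series_part (@normc_Im_le _) c_le)].
Qed.

Lemma power_sumS c : (forall k, normc (c k) <= M) ->
  power_sum c = c 0%N + q * power_sum (fun k => c k.+1).
Proof.
move=> c_le; have c_le' k : normc (c k.+1) <= M by [].
have [cvRe _] := cvg_power_series_part (@normc_Re_le _) c_le.
have [cvIm _] := cvg_power_series_part (@normc_Im_le _) c_le.
have [cvRe' _] := cvg_power_series_part (@normc_Re_le _) c_le'.
have [cvIm' _] := cvg_power_series_part (@normc_Im_le _) c_le'.
rewrite /power_sum (lim_seriesS cvRe) (lim_seriesS cvIm).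
set reS : R ^nat := fun k => complex.Re (q ^+ k * c k.+1) in cvRe' *.
set imS : R ^nat := fun k => complex.Im (q ^+ k * c k.+1) in cvIm' *.
have -> : (fun k => complex.Re (q ^+ k.+1 * c k.+1)) =
    complex.Re q *: reS - complex.Im q *: imS.
  by apply/funext => k; rewrite exprS -mulrA ReM.
have -> : (fun k => complex.Im (q ^+ k.+1 * c k.+1)) =
    complex.Re q *: imS + complex.Im q *: reS.
  by apply/funext => k; rewrite exprS -mulrA ImM.
rewrite lim_seriesB ?lim_seriesD ?is_cvg_seriesD; try exact: is_cvg_seriesZ.
rewrite !lim_seriesZ // expr0 !mul1r.
move: (c 0%N) (limn (series reS)) (limn (series imS)) => [x y] a b.
by case: q => u v; apply/eqP; rewrite eq_complex /= !eqxx.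
Qed.

End PowerSum.

Section BoundedC.
Variables (R : realType) (S : Type).
Implicit Types (f g : S -> R[i]).

Definition boundedC f : Prop := exists M : R, forall s, normc (f s) <= M.

Lemma boundedC0 : boundedC (fun=> 0).
Proof. by exists 0 => s; rewrite Normc.normc0. Qed.

Lemma boundedCD f g :
  boundedC f -> boundedC g -> boundedC (fun s => f s + g s).
Proof.
move=> [Mf hf] [Mg hg]; exists (Mf + Mg) => s.
by apply: le_trans (le_normcD _ _) _; apply: lerD.
Qed.

Lemma boundedCN f : boundedC f -> boundedC (fun s => - f s).
Proof. by move=> [M hM]; exists M => s; rewrite normcN. Qed.

Lemma boundedCMl (a : R[i]) f : boundedC f -> boundedC (fun s => a * f s).
Proof.
move=> [M hM]; exists (normc a * M) => s.
by rewrite Normc.normcM ler_wpM2l ?normc_ge0.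
Qed.

Lemma boundedC_sum (I : Type) (r : seq I) (F : I -> S -> R[i]) :
  (forall i, boundedC (F i)) -> boundedC (fun s => \sum_(i <- r) F i s).
Proof.
move=> F_bd; elim: r => [|i r IH].
  by under eq_fun do rewrite big_nil; exact: boundedC0.
by under eq_fun do rewrite big_cons; exact: boundedCD.
Qed.

Lemma boundedC_comp (H : S -> S) f : boundedC f -> boundedC (fun s => f (H s)).
Proof. by move=> [M hM]; exists M. Qed.

End BoundedC.

Section TwistedEquation.
Variables (R : realType) (S : Type) (F G : S -> S).
Hypotheses (FK : cancel F G) (GK : cancel G F).
Implicit Types (lam q : R[i]) (f u : S -> R[i]).

Lemma contraction_eq0 (H : S -> S) q u : normc q < 1 -> boundedC u ->
  (forall s, u s = q * u (H s)) -> forall s, u s = 0.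
Proof.
move=> q_lt1 [M hM] uE s; apply: Normc.eq0_normc; apply/eqP.
rewrite eq_le normc_ge0 andbT; apply: (@le0_geometric_dom _ _ M (normc q)).
  by rewrite normc_ge0 q_lt1.
have iterE n : u s = q ^+ n * u (iter n H s).
  by elim: n => [|n IH]; rewrite ?expr0 ?mul1r // IH uE exprSr -mulrA.
move=> n; rewrite (iterE n) Normc.normcM normcX mulrC ler_wpM2r //.
by rewrite exprn_ge0 // normc_ge0.
Qed.

Lemma twisted_eq0 lam u : normc lam != 1 -> boundedC u ->
  (forall s, lam * u (F s) = u s) -> forall s, u s = 0.
Proof.
move=> lam_neq1 u_bd uE; have [lt1|gt1|eq1] := ltrgtP (normc lam) 1.
- by apply: (contraction_eq0 (H := F) lt1 u_bd) => s; rewrite uE.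
- apply: (contraction_eq0 (H := G) (inv_normc_lt1 gt1) u_bd) => s.
  by rewrite -(uE (G s)) GK mulKf // normc_gt1_neq0.
- by rewrite eq1 eqxx in lam_neq1.
Qed.

Definition twisted_sol lam f : S -> R[i] := fun s =>
  if normc lam < 1 then - power_sum lam (fun k => f (iter k F s))
  else lam^-1 * power_sum lam^-1 (fun k => f (iter k.+1 G s)).

Lemma twisted_sol_bounded lam f : normc lam != 1 -> boundedC f ->
  boundedC (twisted_sol lam f).
Proof.
move=> lam_neq1 [M hM]; rewrite /twisted_sol.
have [lt1|gt1|eq1] := ltrgtP (normc lam) 1.
- apply/boundedCN; exists ((M / (1 - normc lam)) *+ 2) => s.
  exact: normc_power_sum_le.
- apply/boundedCMl; exists ((M / (1 - normc lam^-1)) *+ 2) => s.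
  exact: normc_power_sum_le (inv_normc_lt1 gt1) _ _.
- by rewrite eq1 eqxx in lam_neq1.
Qed.

Lemma twisted_solE lam f : normc lam != 1 -> boundedC f ->
  forall s, lam * twisted_sol lam f (F s) - twisted_sol lam f s = f s.
Proof.
move=> lam_neq1 [M hM] s; rewrite /twisted_sol.
have [lt1|gt1|eq1] := ltrgtP (normc lam) 1.
- rewrite [in X in _ - X](power_sumS lt1 (fun k => hM _)) /=.
  have -> : (fun k => f (iter k F (F s))) = (fun k => f (iter k.+1 F s)).
    by apply/funext => k; rewrite iterSr.
  by rewrite mulrN opprK addrC addrK.
- have -> : (fun k => f (iter k.+1 G (F s))) = (fun k => f (iter k G s)).
    by apply/funext => k; rewrite iterSr FK.
  rewrite (power_sumS (inv_normc_lt1 gt1) (fun k => hM _)) /=.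
  by rewrite mulrA mulfV ?normc_gt1_neq0 // mul1r addrK.
- by rewrite eq1 eqxx in lam_neq1.
Qed.

End TwistedEquation.

Section BoundedVectors.
Variables (R : realType) (S : Type).

Lemma bounded_onP n (v : S -> 'cV[R[i]]_n) :
  bounded_on v <-> forall k, boundedC (fun s => v s k 0).
Proof.
split => [[M hM] k | /fin_all_exists [M hM]].
  by exists M => s; apply: le_trans (hM s); exact: le_bigmax.
exists (\big[Num.max/0]_k M k) => s; apply: bigmax_le => [|k _].
  exact: bigmax_ge_id.
by apply: le_trans (hM k s) _; exact: le_bigmax.
Qed.

Lemma bounded_onD n (v w : S -> 'cV[R[i]]_n) :
  bounded_on v -> bounded_on w -> bounded_on (fun s => v s + w s).
Proof.
move=> /bounded_onP v_bd /bounded_onP w_bd; apply/bounded_onP => k.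
by under eq_fun do rewrite mxE; exact: boundedCD.
Qed.

Lemma bounded_onN n (v : S -> 'cV[R[i]]_n) :
  bounded_on v -> bounded_on (fun s => - v s).
Proof.
move=> /bounded_onP v_bd; apply/bounded_onP => k.
by under eq_fun do rewrite mxE; exact: boundedCN.
Qed.

Lemma bounded_on_mulmx m n (A : 'M[R[i]]_(m, n)) (v : S -> 'cV[R[i]]_n) :
  bounded_on v -> bounded_on (fun s => A *m v s).
Proof.
move=> /bounded_onP v_bd; apply/bounded_onP => k.
under eq_fun do rewrite mxE.
by apply: boundedC_sum => j; exact: boundedCMl.
Qed.

End BoundedVectors.

Lemma eq_invmx_mulmx (K : comUnitRingType) n p (A : 'M[K]_n)
  (x y : 'M[K]_(n, p)) : A \in unitmx -> x = invmx A *m y <-> A *m x = y.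
Proof.
by move=> A_unit; split => [->|<-]; [exact: mulKVmx | rewrite mulKmx].
Qed.

Section JordanBlock.
Variables (R : realType) (lam : R[i]) (l : nat).
Local Notation L := (Lambda l lam).

Definition shift_down (v : 'cV[R[i]]_l.+1) (a : 'I_l.+1) : R[i] :=
  if val a is m.+1 then v (inord m) 0 else 0.

Lemma Lambda_mulE v a : (L *m v) a 0 = lam * v a 0 + shift_down v a.
Proof.
rewrite mxE (bigD1 a) //= mxE eqxx; congr (_ + _).
case: a => [[|m] lt_m] /=.
  by apply: big1 => b b_neq0; rewrite mxE eq_sym (negbTE b_neq0) mul0r.
have lt_m' : (m < l.+1)%N by exact: ltn_trans lt_m.
rewrite (bigD1 (inord m)) /=; last by rewrite -val_eqE /= inordK // ltn_eqF.
rewrite mxE -val_eqE /= inordK // gtn_eqF // eqxx mul1r big1 ?addr0 // => b.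
case/andP=> b_neq_a b_neq_m; rewrite mxE eq_sym (negbTE b_neq_a).
case: eqP => [[b_eq]|_]; last by rewrite mul0r.
by move: b_neq_m; rewrite -val_eqE /= inordK // b_eq eqxx.
Qed.

Lemma Lambda_unitmx : lam != 0 -> L \in unitmx.
Proof.
move=> lam_neq0; rewrite unitmxE det_trig; last first.
  apply/is_trig_mxP => a b lt_ab; rewrite mxE -val_eqE /= (ltn_eqF lt_ab).
  by rewrite (ltn_eqF (ltn_trans lt_ab (ltnSn _))).
rewrite (eq_bigr (fun _ => lam)) => [|a _]; last by rewrite mxE eqxx.
by rewrite prodr_const card_ord unitfE expf_neq0.
Qed.

Variables (S : Type) (F G : S -> S).
Hypotheses (FK : cancel F G) (GK : cancel G F) (lam_neq1 : normc lam != 1).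

Fixpoint jordan_coord (c : nat -> S -> R[i]) (k : nat) : S -> R[i] :=
  twisted_sol F G lam
    (fun s => c k s - if k is k'.+1 then jordan_coord c k' (F s) else 0).

Definition jordan_sol (e : S -> 'cV[R[i]]_l.+1) (s : S) : 'cV[R[i]]_l.+1 :=
  \col_a jordan_coord (fun k t => e t (inord k) 0) a s.

Section JordanCoord.
Variable c : nat -> S -> R[i].
Hypothesis c_bd : forall k, boundedC (c k).

Lemma jordan_coord_bounded k : boundedC (jordan_coord c k).
Proof.
elim: k => [|k IH]; apply: twisted_sol_bounded lam_neq1 _.
  by apply: boundedCD => //; apply: boundedCN; exact: boundedC0.
by apply: boundedCD => //; apply: boundedCN; exact: boundedC_comp.
Qed.

Lemma jordan_coordE k s :
  lam * jordan_coord c k (F s)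
  + (if k is k'.+1 then jordan_coord c k' (F s) else 0)
  - jordan_coord c k s = c k s.
Proof.
have rhs_bd : boundedC (fun s => c k s -
    if k is k'.+1 then jordan_coord c k' (F s) else 0).
  apply: boundedCD => //; apply: boundedCN.
  case: k => [|k]; first exact: boundedC0.
  exact/boundedC_comp/jordan_coord_bounded.
have := twisted_solE FK lam_neq1 rhs_bd s.
case: k {rhs_bd} => [|k] /=; first by rewrite addr0 subr0.
by rewrite addrAC => ->; rewrite subrK.
Qed.

End JordanCoord.

Lemma jordan_sol_bounded e : bounded_on e -> bounded_on (jordan_sol e).
Proof.
move=> /bounded_onP e_bd; apply/bounded_onP => a.
by under eq_fun do rewrite mxE; exact: jordan_coord_bounded.
Qed.

Lemma jordan_solE e : bounded_on e ->
  forall s, L *m jordan_sol e (F s) - jordan_sol e s = e s.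
Proof.
move=> /bounded_onP e_bd s; apply/matrixP => a j; rewrite ord1 mxE Lambda_mulE.
have c_bd k : boundedC (fun t => e t (inord k) 0) by exact: e_bd.
have -> : e s a 0 = (fun k t => e t (inord k) 0) a s by rewrite /= inord_val.
rewrite -(jordan_coordE c_bd) /shift_down !mxE.
by case: a => [[|m] lt_m] //=; rewrite mxE inordK // ltnW.
Qed.

Lemma jordan_eq0 d : bounded_on d -> (forall s, L *m d (F s) = d s) ->
  forall s, d s = 0.
Proof.
move=> /bounded_onP d_bd dE.
suff coord0 k (a : 'I_l.+1) : val a = k -> forall s, d s a 0 = 0.
  by move=> s; apply/matrixP => a j; rewrite ord1 mxE; exact: coord0.
elim: k a => [|k IH] a a_k; apply: (twisted_eq0 GK lam_neq1 (d_bd a)) => s;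
  rewrite -[in RHS](dE s) Lambda_mulE /shift_down a_k ?addr0 //.
have lt_k : (k < l.+1)%N by move: (ltn_ord a); rewrite a_k => /ltnW.
by rewrite (IH (inord k)) ?addr0 //= inordK.
Qed.

End JordanBlock.

Theorem proposition3p2 (R : realType) (lam : R[i]) (l : nat)
  (S : Type) (Rm : S -> S) (h : S -> 'cV[R[i]]_(l.+1)) :
  Normc.normc lam != 0 -> Normc.normc lam != 1 ->
  bijective Rm ->
  bounded_on (fun s => h (Rm s) - invmx (Lambda l lam) *m h s) ->
  exists hh : S -> 'cV[R[i]]_(l.+1),
    [/\ (forall s, hh (Rm s) = invmx (Lambda l lam) *m hh s),
        bounded_on (fun s => hh s - h s) &
        forall g : S -> 'cV[R[i]]_(l.+1),
          (forall s, g (Rm s) = invmx (Lambda l lam) *m g s) ->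
          bounded_on (fun s => g s - h s) -> g = hh].
Proof.
move=> normc_neq0 lam_neq1 [G FK GK] h_bd.
have L_unit : Lambda l lam \in unitmx.
  apply: Lambda_unitmx; apply: contraNneq normc_neq0 => ->.
  by rewrite Normc.normc0.
set L := Lambda l lam in L_unit *.
pose e s := h s - L *m h (Rm s).
have e_bd : bounded_on e.
  have -> : e = fun s => - (L *m (h (Rm s) - invmx L *m h s)).
    by apply/funext => s; rewrite mulmxBr mulKVmx // opprB.
  exact/bounded_onN/bounded_on_mulmx.
pose u := jordan_sol lam Rm G e.
have u_bd : bounded_on u by exact: jordan_sol_bounded.
have hhE s : h (Rm s) + u (Rm s) = invmx L *m (h s + u s).
  apply/(eq_invmx_mulmx _ _ L_unit); move/eqP: (jordan_solE FK lam_neq1 e_bd s).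
  rewrite subr_eq => /eqP; rewrite mulmxDr => ->.
  by rewrite addrA [L *m _ + _]addrC subrK.
exists (fun s => h s + u s); split => //.
  by under eq_fun do rewrite addrC addKr.
move=> g gE g_bd; apply/funext => s; apply/eqP; rewrite -subr_eq0; apply/eqP.
move: s; apply: (jordan_eq0 GK lam_neq1) => [|s].
  have -> : (fun s => g s - (h s + u s)) = fun s => (g s - h s) - u s.
    by apply/funext => s; rewrite opprD addrA.
  exact/bounded_onD/bounded_onN.
rewrite mulmxBr; move/(eq_invmx_mulmx _ _ L_unit): (gE s) => ->.
by move/(eq_invmx_mulmx _ _ L_unit): (hhE s) => ->.
Qed.
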